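(* Let $n\ge d\ge2$ and let $\mathcal{C}$ be a $d$-uniform clutter on $[n]$ which is both chordal and co-chordal. Then for all $i\ge1$, \[ \lambda_i(\mathcal{C})\le\binom{n-1-i}{d-2}. \]
   Context: $\mathcal{C}_{n,d}$ is the set of all $d$-subsets of $[n]$; a $d$-uniform clutter on $[n]$ is a subset of $\mathcal{C}_{n,d}$. Submaximal circuit: a $(d-1)$-set contained in some circuit. Clique: a set all of whose $d$-subsets are circuits. $\mathrm{N}_{\mathcal{C}}(e)=\{c: e\cup\{c\}\in\mathcal{C}\}$, $\mathrm{N}_{\mathcal{C}}[e]=e\cup\mathrm{N}_{\mathcal{C}}(e)$; $e$ is simplicial if it is a submaximal circuit and $\mathrm{N}_{\mathcal{C}}[e]$ is a clique. $\mathcal{C}\setminus e=\{F\in\mathcal{C}:e\not\subset F\}$; $\mathcal{C}_{e_1\cdots e_i}$ is successive deletion. A simplicial sequence in $\mathcal{C}$ is $e_1,\ldots,e_t$ with $e_1$ simplicial in $\mathcal{C}$ and $e_i$ simplicial in $\mathcal{C}_{e_1\cdots e_{i-1}}$ for $i>1$; a simplicial order is a simplicial sequence $e_1,\ldots,e_r$ with $\mathcal{C}_{e_1\cdots e_r}=\emptyset$, and $\mathcal{C}$ is chordal if one exists. $\mathcal{C}$ is co-chordal if there is a simplicial sequence $e_1,\ldots,e_r$ in $\mathcal{C}_{n,d}$ with $\mathcal{C}=(\mathcal{C}_{n,d})_{e_1\cdots e_r}$. For chordal $\mathcal{C}$, its multiset is $\{N_1,\ldots,N_r\}$ with $N_i=|\mathrm{N}_{\mathcal{C}_{e_1\cdots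 e_{i-1}}}(e_i)|$ for a simplicial order (independent of the order), and $\lambda_i(\mathcal{C})=|\{j:N_j=i\}|$. Binomial coefficients $\binom{a}{b}$ with $a<b$ or $a<0$ are $0$. *)

From mathcomp Require Import all_boot all_algebra.
Set Implicit Arguments. Unset Strict Implicit. Unset Printing Implicit Defensive.

Section Clutters.
Variable n : nat.
Notation clutter := {set {set 'I_n}}.

Definition complete_clutter (d : nat) : clutter := [set F : {set 'I_n} | #|F| == d].

Definition uniform (d : nat) (C : clutter) : Prop := forall F, F \in C -> #|F| = d.

Definition submaximal (d : nat) (C : clutter) (e : {set 'I_n}) : bool :=
  (#|e| == d.-1) && [exists F in C, e \subset F].

Definition nbhd (C : clutter) (e : {set 'I_n}) : {set 'I_n} :=
  [set c | (c |: e) \in C].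

Definition cnbhd (C : clutter) (e : {set 'I_n}) : {set 'I_n} := e :|: nbhd C e.

Definition clique (d : nat) (C : clutter) (S : {set 'I_n}) : bool :=
  [forall F : {set 'I_n}, ((F \subset S) && (#|F| == d)) ==> (F \in C)].

Definition simplicial (d : nat) (C : clutter) (e : {set 'I_n}) : bool :=
  submaximal d C e && clique d C (cnbhd C e).

Definition del (C : clutter) (e : {set 'I_n}) : clutter :=
  [set F in C | ~~ (e \subset F)].

Definition dels (C : clutter) (s : seq {set 'I_n}) : clutter := foldl del C s.

Fixpoint simp_seq (d : nat) (C : clutter) (s : seq {set 'I_n}) : bool :=
  if s is e :: s' then simplicial d C e && simp_seq d (del C e) s' else true.

Definition simp_order (d : nat) (C : clutter) (s : seq {set 'I_n}) : bool :=
  simp_seq d C s && (dels C s == set0).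

Definition chordal (d : nat) (C : clutter) : Prop := exists s, simp_order d C s.

Definition cochordal (d : nat) (C : clutter) : Prop :=
  exists s, simp_seq d (complete_clutter d) s /\ C = dels (complete_clutter d) s.

Fixpoint Nseq (C : clutter) (s : seq {set 'I_n}) : seq nat :=
  if s is e :: s' then #|nbhd C e| :: Nseq (del C e) s' else [::].

Definition lambda (C : clutter) (s : seq {set 'I_n}) (i : nat) : nat :=
  count (pred1 i) (Nseq C s).
End Clutters.

(* binomial coefficient with the convention binom(a,b) = 0 for a < 0 *)
Definition binomZ (a : int) (b : nat) : nat :=
  match a with Posz m => 'C(m, b) | Negz _ => 0 end.

From mathcomp Require Import all_boot all_algebra zify.
Set Implicit Arguments. Unset Strict Implicit. Unset Printing Implicit Defensive.

(* Removing a simplicial e destroys exactly the k-cliques containing e, and since N[e] is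
   a clique these are e together with any (k-d+1)-subset of N(e). So along a simplicial
   order with neighbourhood sizes N_1, ..., N_r the number of k-cliques is
   sum_j C(N_j, k-d+1). Appending a simplicial order of C to the co-chordal sequence that
   produces C gives a simplicial order of C_{n,d}, whose k-cliques are all k-sets; hence
   sum_j C(N_j, m) = C(n, m+d-1) for every m >= 1. By Chu-Vandermonde the multiset with
   multiplicity C(n-1-i, d-2) at i has the same binomial moments, and binomial moments
   determine a multiset (the system is triangular), so lambda_i(C_{n,d}) = C(n-1-i, d-2).
   The N_j of C form a sub-multiset of those of C_{n,d}. *)

Lemma sum_bin_mul_bin N a b :
  \sum_(0 <= i < N.+1) 'C(i, a) * 'C(N - i, b) = 'C(N.+1, a + b + 1).
Proof.
elim: N a b => [|N IH] a b.
  by rewrite big_nat1 sub0n; case: a => [|a]; case: b => [|b]; rewrite ?addn1 ?bin0 ?bin0n ?muln0.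
rewrite big_nat_recr //= subnn.
case: b => [|b].
  under eq_big_nat => i _ do rewrite !bin0.
  have := IH a 0; under eq_big_nat => i _ do rewrite !bin0.
  by rewrite !bin0 muln1 !addn0 => ->; rewrite !addn1 [RHS]binS.
rewrite bin0n muln0 addn0.
under eq_big_nat => i /andP[_ iN] do rewrite (subSn (iN : i <= N)) binS mulnDr.
by rewrite big_split /= !IH !addn1 addnS [RHS]binS.
Qed.

Lemma sum_seq_count (s : seq nat) B (F : nat -> nat) :
  all (gtn B) s ->
  \sum_(x <- s) F x = \sum_(0 <= i < B) count (pred1 i) s * F i.
Proof.
elim: s => [|a s IH] /= => [_|/andP[aB sB]]; first by rewrite big_nil big1.
under [RHS]eq_bigr do rewrite /= mulnDl mulnbl eq_sym.
by rewrite big_cons big_split -IH //= -big_mkcond /= (big_nat1_eq _ _ a) aB.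
Qed.

Lemma eq_binomial_moments (mu nu : nat -> nat) B :
  (forall m, 0 < m ->
     \sum_(0 <= i < B) mu i * 'C(i, m) = \sum_(0 <= i < B) nu i * 'C(i, m)) ->
  forall i, 0 < i < B -> mu i = nu i.
Proof.
move=> moments_eq i; have [k leBik] := ubnP (B - i); elim: k i leBik => // k IHk i.
move=> leBik /andP[i_gt0 ltiB].
have moment_split f :
    \sum_(0 <= j < B) f j * 'C(j, i) = f i + \sum_(i.+1 <= j < B) f j * 'C(j, i).
  rewrite (big_cat_nat (leq0n i) (ltnW ltiB)) (big_ltn ltiB) /= binn muln1.
  by rewrite big1_seq ?add0n // => j /[!mem_index_iota] /andP[_ /bin_small ->]; rewrite muln0.
have := moments_eq i i_gt0; rewrite !moment_split.
rewrite (eq_big_nat _ _ (F2 := fun j => nu j * 'C(j, i))) => [/addIn //|j ltij].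
by rewrite IHk //; lia.
Qed.

Section CliqueCount.
Variables (n d : nat).
Hypothesis d_gt0 : 0 < d.
Implicit Types (D : {set {set 'I_n}}) (e S T F : {set 'I_n}).

Definition nclique D (k : nat) : nat :=
  #|[set S : {set 'I_n} | (#|S| == k) && clique d D S]|.

Lemma uniform_del D e : uniform d D -> uniform d (del D e).
Proof. by move=> uD F; rewrite inE => /andP[/uD]. Qed.

Lemma cliqueP D S :
  reflect (forall F : {set 'I_n}, F \subset S -> #|F| = d -> F \in D) (clique d D S).
Proof.
apply: (iffP forallP) => [cS F FS Fd | cS F]; first by have := cS F; rewrite FS Fd eqxx.
by apply/implyP => /andP[FS /eqP Fd]; apply: cS.
Qed.

Lemma clique_subset D S T : T \subset S -> clique d D S -> clique d D T.
Proof.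
by move=> TS /cliqueP cS; apply/cliqueP => F FT; apply: cS; apply: subset_trans TS.
Qed.

Lemma cardsU1_submax e c : #|e| = d.-1 -> c \notin e -> #|c |: e| = d.
Proof. by move=> ed ce; rewrite cardsU1 ce ed; lia. Qed.

Lemma nbhd_notin D e c :
  uniform d D -> #|e| = d.-1 -> c \in nbhd D e -> c \notin e.
Proof.
move=> uD ed /[!inE] /uD; apply: contraPN => ce.
by rewrite (setUidPr _) ?sub1set // ed; lia.
Qed.

Lemma card_cliques_supset D e k :
  uniform d D -> simplicial d D e -> d.-1 <= k ->
  #|[set S : {set 'I_n} | (#|S| == k) && clique d D S & e \subset S]| =
    'C(#|nbhd D e|, k - d.-1).
Proof.
move=> uD /andP[/andP[/eqP ed _] cNe] lek.
have N_e T : T \subset nbhd D e -> [disjoint T & e].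
  move=> TN; apply/pred0P => x /=.
  by apply/negbTE/andP => -[/(subsetP TN)/(nbhd_notin uD ed)/negP].
have extK T : T \subset nbhd D e -> (e :|: T) :\: e = T.
  by move=> /N_e; rewrite setDUl setDv set0U; apply/setDidPl.
rewrite -cards_draws -[RHS](card_in_imset (f := fun T => e :|: T)); last first.
  move=> T1 T2 /[!inE] /andP[T1N _] /andP[T2N _] eT12.
  by rewrite -(extK _ T1N) -(extK _ T2N) eT12.
apply: eq_card => S; rewrite !inE; apply/idP/imsetP => [|[T /[!inE] /andP[TN /eqP Tk] ->]].
  move=> /andP[/andP[/eqP Sk cS] eS]; exists (S :\: e); last first.
    by rewrite -[LHS](setID S e) (setIidPr eS).
  rewrite inE cardsDS // Sk ed eqxx andbT; apply/subsetP => c /[!inE] /andP[ce cS'].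
  by apply: (cliqueP _ _ cS); rewrite ?subUset ?sub1set ?cS' ?eS // cardsU1_submax.
rewrite subsetUl andbT (clique_subset (setUS e TN) cNe) andbT.
by rewrite cardsU setIC (disjoint_setI0 (N_e T TN)) cards0 subn0 ed Tk; apply/eqP; lia.
Qed.

Lemma clique_del D e S : #|e| = d.-1 -> d <= #|S| ->
  clique d (del D e) S = ~~ (e \subset S) && clique d D S.
Proof.
move=> ed leSd; apply/idP/andP => [/cliqueP cS' | [neS /cliqueP cS]]; last first.
  apply/cliqueP => F FS Fd; rewrite inE cS //=.
  by apply: contra neS => /subset_trans; apply.
split; last by apply/cliqueP => F FS /(cS' F FS) /[!inE] /andP[].
apply/negP => eS; have /card_gt0P[c /[!inE] /andP[ce cS]] : 0 < #|S :\: e|.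
  by rewrite cardsDS // ed; lia.
have /negP[] : c |: e \notin del D e by rewrite inE subsetUr andbF.
by apply: cS'; [rewrite subUset sub1set cS eS | exact: cardsU1_submax].
Qed.

Lemma nclique_del D e k : uniform d D -> simplicial d D e -> d <= k ->
  nclique D k = 'C(#|nbhd D e|, k - d.-1) + nclique (del D e) k.
Proof.
move=> uD se ledk; have [/andP[/eqP ed _] _] := andP se.
rewrite /nclique -(cardsID [set S : {set 'I_n} | e \subset S]) -card_cliques_supset //.
  congr (_ + _); apply: eq_card => S; rewrite !inE //.
  by case: eqP => [Sk|_] /=; rewrite ?andbF // clique_del ?Sk.
exact: leq_trans (leq_pred d) ledk.
Qed.

Lemma nclique0 k : d <= k -> nclique set0 k = 0.
Proof.
move=> ledk; apply: eq_card0 => S; rewrite !inE; apply/negbTE/andP => -[/eqP Sk cS].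
have /card_gt0P[F /[!inE] /andP[FS /eqP Fd]] :
    0 < #|[set F : {set 'I_n} | F \subset S & #|F| == d]|.
  by rewrite cards_draws bin_gt0 Sk.
by have := cliqueP _ _ cS F FS Fd; rewrite inE.
Qed.

Lemma nclique_simp_order D t k : uniform d D -> simp_order d D t -> d <= k ->
  nclique D k = \sum_(x <- Nseq D t) 'C(x, k - d.-1).
Proof.
elim: t D => [|e t IHt] D uD /andP[/= st /eqP tD0] ledk.
  by rewrite big_nil tD0 nclique0.
have [se st'] := andP st.
rewrite big_cons (nclique_del uD se ledk) (IHt _ (uniform_del (e := e) uD)) //.
by apply/andP; split; last exact/eqP.
Qed.

Lemma nclique_complete k : d <= k -> nclique (complete_clutter n d) k = 'C(n, k).
Proof.
move=> ledk; rewrite /nclique -[n in 'C(n, _)]card_ord -card_draws.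
apply: eq_card => S; rewrite !inE; case: eqP => //= _.
by apply/cliqueP => F _ Fd; rewrite inE Fd.
Qed.

Lemma moments_Nseq_complete t m : simp_order d (complete_clutter n d) t -> 0 < m ->
  \sum_(x <- Nseq (complete_clutter n d) t) 'C(x, m) = 'C(n, m + d.-1).
Proof.
move=> ord m_gt0; have ledk : d <= m + d.-1 by lia.
have uD0 : uniform d (complete_clutter n d) by move=> F /[!inE] /eqP.
by rewrite -nclique_complete // (nclique_simp_order uD0 ord ledk) addnK.
Qed.

End CliqueCount.

Lemma simp_seq_cat n d (D : {set {set 'I_n}}) a b :
  simp_seq d D (a ++ b) = simp_seq d D a && simp_seq d (dels D a) b.
Proof. by elim: a D => [|e a IHa] D //=; rewrite IHa andbA. Qed.

Lemma simp_order_cat n d (D : {set {set 'I_n}}) a b :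
  simp_seq d D a -> simp_order d (dels D a) b -> simp_order d D (a ++ b).
Proof. by rewrite /simp_order simp_seq_cat /dels foldl_cat => -> /andP[-> ->]. Qed.

Lemma Nseq_cat n (D : {set {set 'I_n}}) a b :
  Nseq D (a ++ b) = Nseq D a ++ Nseq (dels D a) b.
Proof. by elim: a D => [|e a IHa] D //=; rewrite IHa. Qed.

Lemma Nseq_complete_lt n d t : 2 <= d <= n ->
  simp_order d (complete_clutter n d) t -> all (gtn n) (Nseq (complete_clutter n d) t).
Proof.
move=> /andP[d_ge2 ledn] ord; apply/allP => x xN /=; rewrite ltnNge; apply/negP => lenx.
have x_gt0 : 0 < x by lia.
(* x contributes C(x, x) = 1 to the x-th moment, which is C(n, x + d - 1) = 0 *)
have := moments_Nseq_complete (ltnW d_ge2) ord x_gt0.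
by rewrite (big_rem _ xN) binn bin_small //; lia.
Qed.

Lemma lambda_complete n d t i : 2 <= d <= n ->
  simp_order d (complete_clutter n d) t -> 0 < i ->
  lambda (complete_clutter n d) t i = binomZ (n%:Z - 1 - i%:Z)%R (d - 2).
Proof.
move=> dn ord i_gt0; have d_gt0 : 0 < d by lia.
have N_lt := Nseq_complete_lt dn ord.
case: (ltnP i n) => [ltin | lein]; last first.
  have -> : (n%:Z - 1 - i%:Z)%R = Negz (i - n) by lia.
  apply/count_memPn; apply: contraTN lein => /(allP N_lt); rewrite /= -ltnNge; lia.
have -> : (n%:Z - 1 - i%:Z)%R = ((n.-1 - i)%:Z)%R by lia.
apply: (@eq_binomial_moments (fun j => count (pred1 j) (Nseq _ t))
                            (fun j => 'C(n.-1 - j, d - 2)) n) => [m m_gt0|]; last first.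
  by rewrite i_gt0.
rewrite -sum_seq_count ?N_lt ?moments_Nseq_complete //.
under eq_bigr do rewrite mulnC.
have n_gt0 : 0 < n by lia.
by rewrite -[n in RHS](prednK n_gt0) sum_bin_mul_bin prednK //; congr 'C(_, _); lia.
Qed.

Theorem corollary4p8 (n d : nat) (C : {set {set 'I_n}}) :
  (2 <= d)%N -> (d <= n)%N ->
  uniform d C -> chordal d C -> cochordal d C ->
  forall s : seq {set 'I_n}, simp_order d C s ->
  forall i : nat, (1 <= i)%N ->
    (lambda C s i <= binomZ (n%:Z - 1 - i%:Z)%R (d - 2))%N.
Proof.
move=> d_ge2 ledn _ _ [es [es_simp ->]] s s_ord i i_gt0.
have ord := simp_order_cat es_simp s_ord.
rewrite -(lambda_complete _ ord) ?d_ge2 // /lambda Nseq_cat count_cat.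
exact: leq_addl.
Qed.
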